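(* For all $k,\ell\in\mathbb N$ the following hold in the $q$-shuffle algebra $\mathbb V$: $$[W_{-k},G_\ell]_q=[W_{-\ell},G_k]_q,\qquad [G_k,W_{\ell+1}]_q=[G_\ell,W_{k+1}]_q,$$ $$[\tilde G_k,W_{-\ell}]_q=[\tilde G_\ell,W_{-k}]_q,\qquad [W_{\ell+1},\tilde G_k]_q=[W_{k+1},\tilde G_\ell]_q,$$ $$[G_k,\tilde G_{\ell+1}]-[G_\ell,\tilde G_{k+1}]=q[W_{-\ell},W_{k+1}]_q-q[W_{-k},W_{\ell+1}]_q,$$ $$[\tilde G_k,G_{\ell+1}]-[\tilde G_\ell,G_{k+1}]=q[W_{\ell+1},W_{-k}]_q-q[W_{k+1},W_{-\ell}]_q,$$ $$[G_{k+1},\tilde G_{\ell+1}]_q-[G_{\ell+1},\tilde G_{k+1}]_q=q[W_{-\ell},W_{k+2}]-q[W_{-k},W_{\ell+2}],$$ $$[\tilde G_{k+1},G_{\ell+1}]_q-[\tilde G_{\ell+1},G_{k+1}]_q=q[W_{\ell+1},W_{-k-1}]-q[W_{k+1},W_{-\ell-1}].$$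
   Context: Let $\mathbb F$ be a field and let $q\in\mathbb F$ be nonzero and not a root of unity. Let $\mathbb V$ be the free associative $\mathbb F$-algebra on noncommuting $x,y$, with basis the words (including $1$). Juxtaposition denotes concatenation. Set $\langle x,x\rangle=\langle y,y\rangle=2$ and $\langle x,y\rangle=\langle y,x\rangle=-2$. The $q$-shuffle product $\star$ is the bilinear product determined as follows: - $1\star v=v\star 1=v$; - for nontrivial words $u=u_1\cdots u_r$ and $v=v_1\cdots v_s$, $$u\star v=u_1((u_2\cdots u_r)\star v)+v_1(u\star(v_2\cdots v_s))q^{\langle u_1,v_1\rangle+\cdots+\langle u_r,v_1\rangle}.$$ This makes $\mathbb V$ an associative algebra, the $q$-shuffle algebra. Write $[a,b]=a\star b-b\star a$ and $[a,b]_q=q\,a\star b-q^{-1}b\star a$. For $k\in\mathbb N$: - $W_{-k}=xyx\cdots x$ is the alternating word of length $2k+1$ beginning and ending with $x$; - $W_{k+1}=yxy\cdots y$ is the alternating word of length $2k+1$ beginning and ending with $y$; - $G_k=yxyx\cdots yx$ is the word of length $2k$; - $\tilde G_k=xyxy\cdots xy$ is the word of length $2k$; - $G_0=\tilde G_0=1$. *)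

From mathcomp Require Import all_boot all_order all_algebra.
Set Implicit Arguments. Unset Strict Implicit. Unset Printing Implicit Defensive.
Import Order.TTheory GRing.Theory Num.Theory.
Local Open Scope ring_scope.

(* Letters: [false] is x, [true] is y.  Words are sequences of letters. *)
Notation letter := bool.
Notation lx := false.
Notation ly := true.
Definition word := seq letter.

Definition pairing (a b : letter) : int := if a == b then 2%Z else (-2)%Z.

Section QShuffle.
Variable F : fieldType.
Variable q : F.

(* An element of the free algebra V is represented by a formal finite linear
   combination of words (a list of (coefficient, word) pairs); two such
   representations denote the same element of V iff they have the same
   coefficient on every word (see [veq]). *)
Definition V := seq (F * word).

Definition vcoef (v : V) (w : word) : F := \sum_(p <- v | p.2 == w) p.1.
Definition veq (a b : V) : Prop := forall w : word, vcoef a w = vcoef b w.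

Definition vword (w : word) : V := [:: (1, w)].
Definition vadd (a b : V) : V := a ++ b.
Definition vscale (c : F) (a : V) : V := [seq (c * p.1, p.2) | p <- a].
Definition vsub (a b : V) : V := vadd a (vscale (-1) b).
Definition vcons (l : letter) (a : V) : V := [seq (p.1, l :: p.2) | p <- a].

Fixpoint wshuffle (u : word) : word -> V :=
  match u with
  | [::] => fun v => vword v
  | u1 :: u' =>
      fix wsh_u (v : word) : V :=
        match v with
        | [::] => vword u
        | v1 :: v' =>
            vadd (vcons u1 (wshuffle u' v))
                 (vscale (q ^ (\sum_(a <- u) pairing a v1)) (vcons v1 (wsh_u v')))
        end
  end.

Definition vstar (a b : V) : V :=
  flatten [seq [seq (p.1 * r.1 * s.1, s.2) | s <- wshuffle p.2 r.2] | p <- a, r <- b].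

Definition comm (a b : V) : V := vsub (vstar a b) (vstar b a).
Definition qcomm (a b : V) : V := vsub (vscale q (vstar a b)) (vscale q^-1 (vstar b a)).

End QShuffle.

Definition altw (a : letter) (n : nat) : word := mkseq (fun i => if odd i then ~~ a else a) n.

Definition Wm (F : fieldType) (k : nat) : V F := vword F (altw lx (2 * k).+1).
Definition Wp (F : fieldType) (k : nat) : V F := vword F (altw ly (2 * k).+1).
Definition W (F : fieldType) (n : int) : V F :=
  match n with
  | Posz 0 => Wm F 0
  | Posz (S k) => Wp F k
  | Negz k => Wm F k.+1
  end.
Definition G (F : fieldType) (k : nat) : V F := vword F (altw ly (2 * k)).
Definition Gt (F : fieldType) (k : nat) : V F := vword F (altw lx (2 * k)).

From mathcomp Require Import all_boot all_order all_algebra.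
From mathcomp Require Import ring.
Import GRing.Theory.

Set Implicit Arguments.
Unset Strict Implicit.
Unset Printing Implicit Defensive.
Local Open Scope ring_scope.

(* Compare the coefficients of an arbitrary word w on both sides.  Reading off
   the first letter a of w, the q-shuffle product obeys a twisted Leibniz rule:
   the coefficient of a w in u * v is that of w in u' * v when u = a u', plus
   q^(<u,a>) times that of w in u * v' when v = a v'.  Applied to
   the identities of the theorem, together with the commutativity of the W_{-k},
   the commutativity of the G_k, and the two identities
   [W_{-k+1}, G_l] = [W_{-l+1}, G_k] and [W_{-k+1}, G~_l] = [W_{-l+1}, G~_k],
   the rule turns each identity at a w into a linear combination of identities of
   the same family at w or at the mirror image of w under x <-> y, so all of
   them hold by induction on w. *)

Lemma altwS a n : altw a n.+1 = a :: altw (~~ a) n.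
Proof.
rewrite /altw /mkseq /=; congr (_ :: _).
rewrite -[1%N]/(1 + 0)%N iotaDl -map_comp; apply: eq_map => i /=.
by case: (odd i); case: a.
Qed.

Lemma map_negb_altw a n : map negb (altw a n) = altw (~~ a) n.
Proof. by elim: n a => [|n IHn] a //; rewrite !altwS /= IHn. Qed.

Definition wm k := altw lx (2 * k).+1.
Definition wp k := altw ly (2 * k).+1.
Definition wg k := altw ly (2 * k).
Definition wgt k := altw lx (2 * k).

Lemma wm_cons k : wm k = lx :: wg k. Proof. exact: altwS. Qed.
Lemma wp_cons k : wp k = ly :: wgt k. Proof. exact: altwS. Qed.
Lemma wgS k : wg k.+1 = ly :: wm k. Proof. by rewrite /wg mulnS altwS. Qed.
Lemma wgtS k : wgt k.+1 = lx :: wp k. Proof. by rewrite /wgt mulnS altwS. Qed.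

Lemma wgt0 : wgt 0 = [::]. Proof. by []. Qed.

Lemma wg_eq_nil k : (wg k == [::]) = (k == 0)%N. Proof. by case: k. Qed.
Lemma wgt_eq_nil k : (wgt k == [::]) = (k == 0)%N. Proof. by case: k. Qed.

Lemma map_negb_wm k : map negb (wm k) = wp k. Proof. exact: map_negb_altw. Qed.
Lemma map_negb_wp k : map negb (wp k) = wm k. Proof. exact: map_negb_altw. Qed.
Lemma map_negb_wg k : map negb (wg k) = wgt k. Proof. exact: map_negb_altw. Qed.
Lemma map_negb_wgt k : map negb (wgt k) = wg k. Proof. exact: map_negb_altw. Qed.

Definition map_negbE := (map_negb_wm, map_negb_wp, map_negb_wg, map_negb_wgt).

Section QShuffleCoefficients.
Variable F : fieldType.

Lemma vcoef_cat (a b : V F) w : vcoef (a ++ b) w = vcoef a w + vcoef b w.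
Proof. by rewrite /vcoef big_cat. Qed.

Lemma vcoef_vscale c (a : V F) w : vcoef (vscale c a) w = c * vcoef a w.
Proof. by rewrite /vcoef /vscale big_map mulr_sumr. Qed.

Lemma vcoef_vsub (a b : V F) w : vcoef (vsub a b) w = vcoef a w - vcoef b w.
Proof. by rewrite /vsub /vadd vcoef_cat vcoef_vscale mulN1r. Qed.

Lemma vcoef_vword u w : vcoef (vword F u) w = (u == w)%:R.
Proof. by rewrite /vcoef big_cons big_nil addr0; case: (u == w). Qed.

Lemma vcoef_vcons l (a : V F) b w :
  vcoef (vcons l a) (b :: w) = (l == b)%:R * vcoef a w.
Proof.
rewrite /vcoef /vcons big_map; case: (eqVneq l b) => [->|neq_lb].
  by rewrite mul1r; apply: eq_bigl => p /=; rewrite eqseq_cons eqxx.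
by rewrite mul0r big1 // => p; rewrite eqseq_cons (negbTE neq_lb).
Qed.

Lemma vcoef_vcons_nil l (a : V F) : vcoef (vcons l a) [::] = 0.
Proof. by rewrite /vcoef /vcons big_map big1. Qed.

Variable q : F.

Definition shcoef u v w := vcoef (wshuffle q u v) w.
Definition comm_coef u v w := shcoef u v w - shcoef v u w.
Definition qcomm_coef u v w := q * shcoef u v w - q^-1 * shcoef v u w.

Lemma vcoef_vstar_vword u v w : vcoef (vstar q (vword F u) (vword F v)) w = shcoef u v w.
Proof. by rewrite /vcoef /vstar /= cats0 big_map; apply: eq_bigr => p _; rewrite !mul1r. Qed.

Lemma vcoef_comm_vword u v w : vcoef (comm q (vword F u) (vword F v)) w = comm_coef u v w.
Proof. by rewrite /comm vcoef_vsub !vcoef_vstar_vword. Qed.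

Lemma vcoef_qcomm_vword u v w : vcoef (qcomm q (vword F u) (vword F v)) w = qcomm_coef u v w.
Proof. by rewrite /qcomm vcoef_vsub !vcoef_vscale !vcoef_vstar_vword. Qed.

Definition qpow (u : word) (a : letter) : F := q ^ (\sum_(c <- u) pairing c a).

Lemma wshuffle_cons b u c v :
  wshuffle q (b :: u) (c :: v) =
  vadd (vcons b (wshuffle q u (c :: v)))
       (vscale (qpow (b :: u) c) (vcons c (wshuffle q (b :: u) v))).
Proof. by []. Qed.

Lemma shcoef_nil_l v w : shcoef [::] v w = (v == w)%:R.
Proof. exact: vcoef_vword. Qed.

Lemma shcoef_nil_r u w : shcoef u [::] w = (u == w)%:R.
Proof. by case: u => *; rewrite /shcoef vcoef_vword. Qed.

Lemma shcoef_nil u v : shcoef u v [::] = (u == [::])%:R * (v == [::])%:R.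
Proof.
case: u => [|b u]; first by rewrite shcoef_nil_l mul1r.
case: v => [|c v]; first by rewrite shcoef_nil_r mulr1.
by rewrite /shcoef wshuffle_cons vcoef_cat vcoef_vscale !vcoef_vcons_nil mulr0 addr0 mul0r.
Qed.

Definition dl u a v w := if u is b :: u' then (b == a)%:R * shcoef u' v w else 0.
Definition dr u v a w := if v is c :: v' then (c == a)%:R * qpow u a * shcoef u v' w else 0.

Lemma shcoef_cons u v a w : shcoef u v (a :: w) = dl u a v w + dr u v a w.
Proof.
case: u => [|b u]; case: v => [|c v].
- by rewrite shcoef_nil_l /= add0r.
- rewrite shcoef_nil_l /= add0r /qpow big_nil expr0z mulr1 shcoef_nil_l eqseq_cons.
  by case: (c == a); case: (v == w); rewrite ?mul1r ?mul0r.
- rewrite shcoef_nil_r /= addr0 shcoef_nil_r eqseq_cons.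
  by case: (b == a); case: (u == w); rewrite ?mul1r ?mul0r.
- rewrite /shcoef wshuffle_cons vcoef_cat vcoef_vscale !vcoef_vcons /=.
  by case: (eqVneq c a) => [->|_]; rewrite ?mul0r ?mulr0 // mulrCA mulrA.
Qed.

Lemma qpow_map_negb u a : qpow (map negb u) (~~ a) = qpow u a.
Proof. by rewrite /qpow big_map; congr (_ ^ _); apply: eq_bigr => c _; case: c; case: a. Qed.

Lemma shcoef_map_negb u v w :
  shcoef (map negb u) (map negb v) (map negb w) = shcoef u v w.
Proof.
elim: w u v => [|a w IHw] u v; first by rewrite !shcoef_nil; case: u; case: v.
rewrite /= !shcoef_cons; congr (_ + _).
  by case: u => [|b u] //=; rewrite IHw; case: a; case: b.
by case: v => [|c v] //=; rewrite IHw qpow_map_negb; case: a; case: c.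
Qed.

Lemma shcoef_mirror u v w : shcoef u v (map negb w) = shcoef (map negb u) (map negb v) w.
Proof. by rewrite -shcoef_map_negb !mapK //; apply: negbK. Qed.

(* [ind_pos k * f k.-1] is f (k - 1) for k > 0 and 0 for k = 0, as in the
   first-letter expansion of G_k = y W_{-(k-1)}, G_0 = 1. *)
Definition ind_pos (k : nat) : F := (0 < k)%:R.

Lemma ind_pos0 : ind_pos 0 = 0. Proof. by []. Qed.
Lemma ind_posS k : ind_pos k.+1 = 1. Proof. by []. Qed.

Lemma sum_pairing_wg k a : \sum_(c <- wg k) pairing c a = 0.
Proof.
elim: k => [|k IHk]; first by rewrite big_nil.
by rewrite wgS wm_cons !big_cons IHk addr0; case: (a).
Qed.

Lemma sum_pairing_wgt k a : \sum_(c <- wgt k) pairing c a = 0.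
Proof.
elim: k => [|k IHk]; first by rewrite big_nil.
by rewrite wgtS wp_cons !big_cons IHk addr0; case: (a).
Qed.

Lemma qpow_wg k a : qpow (wg k) a = 1.
Proof. by rewrite /qpow sum_pairing_wg expr0z. Qed.

Lemma qpow_wgt k a : qpow (wgt k) a = 1.
Proof. by rewrite /qpow sum_pairing_wgt expr0z. Qed.

Lemma qpow_wm k a : qpow (wm k) a = if a then (q ^+ 2)^-1 else q ^+ 2.
Proof. by rewrite /qpow wm_cons big_cons sum_pairing_wg addr0; case: a. Qed.

Lemma qpow_wp k a : qpow (wp k) a = if a then q ^+ 2 else (q ^+ 2)^-1.
Proof. by rewrite /qpow wp_cons big_cons sum_pairing_wgt addr0; case: a. Qed.

Lemma dl_wm k a v w : dl (wm k) a v w = if a then 0 else shcoef (wg k) v w.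
Proof. by rewrite wm_cons; case: a; rewrite /= ?mul0r ?mul1r. Qed.

Lemma dl_wp k a v w : dl (wp k) a v w = if a then shcoef (wgt k) v w else 0.
Proof. by rewrite wp_cons; case: a; rewrite /= ?mul0r ?mul1r. Qed.

Lemma dl_wg k a v w : dl (wg k) a v w = if a then ind_pos k * shcoef (wm k.-1) v w else 0.
Proof. by case: k => [|k]; rewrite ?wgS; case: a; rewrite /= ?mul0r. Qed.

Lemma dl_wgt k a v w : dl (wgt k) a v w = if a then 0 else ind_pos k * shcoef (wp k.-1) v w.
Proof. by case: k => [|k]; rewrite ?wgtS; case: a; rewrite /= ?mul0r. Qed.

Lemma dr_wm u k a w : dr u (wm k) a w = if a then 0 else qpow u lx * shcoef u (wg k) w.
Proof. by rewrite wm_cons; case: a; rewrite /= ?mul0r ?mul1r. Qed.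

Lemma dr_wp u k a w : dr u (wp k) a w = if a then qpow u ly * shcoef u (wgt k) w else 0.
Proof. by rewrite wp_cons; case: a; rewrite /= ?mul0r ?mul1r. Qed.

Lemma dr_wg u k a w :
  dr u (wg k) a w = if a then ind_pos k * qpow u ly * shcoef u (wm k.-1) w else 0.
Proof. by case: k => [|k]; rewrite ?wgS; case: a; rewrite /= ?mul0r. Qed.

Lemma dr_wgt u k a w :
  dr u (wgt k) a w = if a then 0 else ind_pos k * qpow u lx * shcoef u (wp k.-1) w.
Proof. by case: k => [|k]; rewrite ?wgtS; case: a; rewrite /= ?mul0r. Qed.

Definition qpowE := (qpow_wm, qpow_wp, qpow_wg, qpow_wgt).
Definition dlE := (dl_wm, dl_wp, dl_wg, dl_wgt).
Definition drE := (dr_wm, dr_wp, dr_wg, dr_wgt).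

Record relations (w : word) : Prop := Relations {
  comm_Wm k l : comm_coef (wm k) (wm l) w = 0;
  comm_G k l : comm_coef (wg k) (wg l) w = 0;
  comm_Wm_G k l :
    ind_pos k * comm_coef (wm k.-1) (wg l) w = ind_pos l * comm_coef (wm l.-1) (wg k) w;
  qcomm_Wm_G k l : qcomm_coef (wm k) (wg l) w = qcomm_coef (wm l) (wg k) w;
  qcomm_Gt_Wm k l : qcomm_coef (wgt k) (wm l) w = qcomm_coef (wgt l) (wm k) w;
  comm_G_Gt k l :
    comm_coef (wg k) (wgt l.+1) w - comm_coef (wg l) (wgt k.+1) w =
    q * qcomm_coef (wm l) (wp k) w - q * qcomm_coef (wm k) (wp l) w;
  qcomm_G_Gt k l :
    qcomm_coef (wg k) (wgt l) w - qcomm_coef (wg l) (wgt k) w =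
    q * (ind_pos l * comm_coef (wm l.-1) (wp k) w) -
    q * (ind_pos k * comm_coef (wm k.-1) (wp l) w);
  comm_Wm_Gt k l :
    ind_pos k * comm_coef (wm k.-1) (wgt l) w = ind_pos l * comm_coef (wm l.-1) (wgt k) w
}.

Section Mirror.
Variable w : word.
Hypothesis Rnw : relations (map negb w).

Lemma mirror_qcomm_Wp_Gt k l : qcomm_coef (wp k) (wgt l) w = qcomm_coef (wp l) (wgt k) w.
Proof.
by have := qcomm_Wm_G Rnw k l; rewrite /qcomm_coef !shcoef_mirror !map_negbE.
Qed.

Lemma mirror_qcomm_G_Wp k l : qcomm_coef (wg k) (wp l) w = qcomm_coef (wg l) (wp k) w.
Proof.
by have := qcomm_Gt_Wm Rnw k l; rewrite /qcomm_coef !shcoef_mirror !map_negbE.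
Qed.

Lemma mirror_comm_Gt_G k l :
  comm_coef (wgt k) (wg l.+1) w - comm_coef (wgt l) (wg k.+1) w =
  q * qcomm_coef (wp l) (wm k) w - q * qcomm_coef (wp k) (wm l) w.
Proof.
have := comm_G_Gt Rnw k l.
by rewrite /comm_coef /qcomm_coef !shcoef_mirror !map_negbE.
Qed.

Lemma mirror_qcomm_Gt_G k l :
  qcomm_coef (wgt k) (wg l) w - qcomm_coef (wgt l) (wg k) w =
  q * (ind_pos l * comm_coef (wp l.-1) (wm k) w) -
  q * (ind_pos k * comm_coef (wp k.-1) (wm l) w).
Proof.
have := qcomm_G_Gt Rnw k l.
by rewrite /comm_coef /qcomm_coef !shcoef_mirror !map_negbE.
Qed.

End Mirror.

Lemma relations_nil : relations [::].
Proof.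
by split=> k l; rewrite /comm_coef /qcomm_coef !shcoef_nil ?wm_cons ?wp_cons /=
  ?wg_eq_nil ?wgt_eq_nil; ring.
Qed.

Lemma eq_by_lincomb1 (c x y a b : F) : a = b -> x - y = c * (a - b) -> x = y.
Proof. by move=> -> /eqP; rewrite subrr mulr0 subr_eq0 => /eqP. Qed.
Arguments eq_by_lincomb1 c {x y a b}.

Lemma eq_by_lincomb2 (c1 c2 x y a1 b1 a2 b2 : F) :
  a1 = b1 -> a2 = b2 -> x - y = c1 * (a1 - b1) + c2 * (a2 - b2) -> x = y.
Proof. by move=> -> -> /eqP; rewrite !subrr !mulr0 addr0 subr_eq0 => /eqP. Qed.
Arguments eq_by_lincomb2 c1 c2 {x y a1 b1 a2 b2}.

Hypothesis q_neq0 : q != 0.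

(* Leaves two goals: first a = y (true), then a = x (false). *)
Ltac expand_head a :=
  rewrite /comm_coef /qcomm_coef !shcoef_cons ?dlE ?drE ?qpowE; case: a; cbv beta iota.

Ltac solve_lin :=
  rewrite /comm_coef /qcomm_coef ?ind_posS ?succnK; field.

Section Step.
Variable w : word.
Hypotheses (Rw : relations w) (Rnw : relations (map negb w)).

Lemma comm_Wm_cons a k l : comm_coef (wm k) (wm l) (a :: w) = 0.
Proof.
expand_head a; first by ring.
by apply: (eq_by_lincomb1 q (qcomm_Wm_G Rw k l)); solve_lin.
Qed.

Lemma comm_G_cons a k l : comm_coef (wg k) (wg l) (a :: w) = 0.
Proof.
expand_head a; last by ring.
by apply: (eq_by_lincomb1 1 (comm_Wm_G Rw k l)); solve_lin.
Qed.

Lemma comm_Wm_G_cons a k l :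
  ind_pos k * comm_coef (wm k.-1) (wg l) (a :: w) =
  ind_pos l * comm_coef (wm l.-1) (wg k) (a :: w).
Proof.
expand_head a.
  apply: (eq_by_lincomb1 (ind_pos k * ind_pos l * (1 + q^-2)) (comm_Wm Rw k.-1 l.-1)).
  by solve_lin.
apply: (eq_by_lincomb2 (ind_pos k) (- ind_pos l) (comm_G Rw k.-1 l) (comm_G Rw l.-1 k)).
by solve_lin.
Qed.

Lemma qcomm_Wm_G_cons a k l :
  qcomm_coef (wm k) (wg l) (a :: w) = qcomm_coef (wm l) (wg k) (a :: w).
Proof.
expand_head a.
  apply: (eq_by_lincomb2 (q^-1 * ind_pos l) (- q^-1 * ind_pos k)
           (comm_Wm Rw k l.-1) (comm_Wm Rw l k.-1)).
  by solve_lin.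
by apply: (eq_by_lincomb1 (q + q^-1) (comm_G Rw k l)); solve_lin.
Qed.

Lemma qcomm_Gt_Wm_cons a k l :
  qcomm_coef (wgt k) (wm l) (a :: w) = qcomm_coef (wgt l) (wm k) (a :: w).
Proof.
expand_head a; first by ring.
by apply: (eq_by_lincomb1 1 (mirror_qcomm_Gt_G Rnw k l)); solve_lin.
Qed.

Lemma comm_G_Gt_cons a k l :
  comm_coef (wg k) (wgt l.+1) (a :: w) - comm_coef (wg l) (wgt k.+1) (a :: w) =
  q * qcomm_coef (wm l) (wp k) (a :: w) - q * qcomm_coef (wm k) (wp l) (a :: w).
Proof.
expand_head a.
  apply: (eq_by_lincomb2 1 (-1) (comm_Wm_Gt Rw k l.+1) (comm_Wm_Gt Rw l k.+1)).
  by solve_lin.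
by apply: (eq_by_lincomb1 (q + q^-1) (mirror_qcomm_G_Wp Rnw k l)); solve_lin.
Qed.

Lemma qcomm_G_Gt_cons a k l :
  qcomm_coef (wg k) (wgt l) (a :: w) - qcomm_coef (wg l) (wgt k) (a :: w) =
  q * (ind_pos l * comm_coef (wm l.-1) (wp k) (a :: w)) -
  q * (ind_pos k * comm_coef (wm k.-1) (wp l) (a :: w)).
Proof.
expand_head a.
  by apply: (eq_by_lincomb1 (q + q^-1) (comm_Wm_Gt Rw k l)); solve_lin.
apply: (eq_by_lincomb2 (ind_pos l) (- ind_pos k)
         (mirror_qcomm_G_Wp Rnw k l.-1) (mirror_qcomm_G_Wp Rnw l k.-1)).
by solve_lin.
Qed.

Lemma comm_Wm_Gt_cons a k l :
  ind_pos k * comm_coef (wm k.-1) (wgt l) (a :: w) =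
  ind_pos l * comm_coef (wm l.-1) (wgt k) (a :: w).
Proof.
expand_head a; first by ring.
case: k => [|k]; case: l => [|l];
  rewrite ?ind_pos0 ?wgt0 ?shcoef_nil_l ?shcoef_nil_r; try by ring.
by apply: (eq_by_lincomb1 1 (comm_G_Gt Rw k l)); solve_lin.
Qed.

Lemma relations_cons a : relations (a :: w).
Proof.
split=> k l.
- exact: comm_Wm_cons.
- exact: comm_G_cons.
- exact: comm_Wm_G_cons.
- exact: qcomm_Wm_G_cons.
- exact: qcomm_Gt_Wm_cons.
- exact: comm_G_Gt_cons.
- exact: qcomm_G_Gt_cons.
- exact: comm_Wm_Gt_cons.
Qed.

End Step.

Lemma relations_all w : relations w.
Proof.
suff: relations w /\ relations (map negb w) by case.
elim: w => [|a w [Rw Rnw]]; first by split; apply: relations_nil.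
split; first exact: relations_cons.
by apply: relations_cons; rewrite // (mapK negbK).
Qed.

End QShuffleCoefficients.

Lemma W_opp (F : fieldType) (k : nat) : W F (- (k : int)) = vword F (wm k).
Proof. by case: k. Qed.

Lemma W_oppS (F : fieldType) (k : nat) : W F (- (k : int) - 1) = vword F (wm k.+1).
Proof. by rewrite -opprD -PoszD addn1. Qed.

Lemma W_add1 (F : fieldType) (k : nat) : W F ((k : int) + 1) = vword F (wp k).
Proof. by rewrite -PoszD addn1. Qed.

Lemma W_add2 (F : fieldType) (k : nat) : W F ((k : int) + 2) = vword F (wp k.+1).
Proof. by rewrite -PoszD addn2. Qed.

Lemma G_vword (F : fieldType) k : G F k = vword F (wg k). Proof. by []. Qed.

Lemma Gt_vword (F : fieldType) k : Gt F k = vword F (wgt k). Proof. by []. Qed.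

Theorem proposition5p11 (F : fieldType) (q : F) (hq0 : q != 0)
    (hq : forall n : nat, (0 < n)%N -> q ^+ n != 1) (k l : nat) :
  let kz := (k : int) in let lz := (l : int) in
  veq (qcomm q (W F (- kz)) (G F l)) (qcomm q (W F (- lz)) (G F k)) /\
      veq (qcomm q (G F k) (W F (lz + 1))) (qcomm q (G F l) (W F (kz + 1))) /\
      veq (qcomm q (Gt F k) (W F (- lz))) (qcomm q (Gt F l) (W F (- kz))) /\
      veq (qcomm q (W F (lz + 1)) (Gt F k)) (qcomm q (W F (kz + 1)) (Gt F l)) /\
      veq (vsub (comm q (G F k) (Gt F l.+1)) (comm q (G F l) (Gt F k.+1)))
          (vsub (vscale q (qcomm q (W F (- lz)) (W F (kz + 1))))
                (vscale q (qcomm q (W F (- kz)) (W F (lz + 1))))) /\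
      veq (vsub (comm q (Gt F k) (G F l.+1)) (comm q (Gt F l) (G F k.+1)))
          (vsub (vscale q (qcomm q (W F (lz + 1)) (W F (- kz))))
                (vscale q (qcomm q (W F (kz + 1)) (W F (- lz))))) /\
      veq (vsub (qcomm q (G F k.+1) (Gt F l.+1)) (qcomm q (G F l.+1) (Gt F k.+1)))
          (vsub (vscale q (comm q (W F (- lz)) (W F (kz + 2))))
                (vscale q (comm q (W F (- kz)) (W F (lz + 2))))) /\
      veq (vsub (qcomm q (Gt F k.+1) (G F l.+1)) (qcomm q (Gt F l.+1) (G F k.+1)))
          (vsub (vscale q (comm q (W F (lz + 1)) (W F (- kz - 1))))
                (vscale q (comm q (W F (kz + 1)) (W F (- lz - 1))))).
Proof.
move=> kz lz; rewrite /kz /lz !W_opp !W_oppS !W_add1 !W_add2 !G_vword !Gt_vword.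
have R w := relations_all hq0 w.
have Rn w := relations_all hq0 (map negb w).
split; [|split; [|split; [|split; [|split; [|split; [|split]]]]]] => w;
  rewrite ?(vcoef_qcomm_vword, vcoef_comm_vword, vcoef_vsub, vcoef_vscale).
- exact: (qcomm_Wm_G (R w)).
- exact: (mirror_qcomm_G_Wp (Rn w)).
- exact: (qcomm_Gt_Wm (R w)).
- exact: (mirror_qcomm_Wp_Gt (Rn w)).
- exact: (comm_G_Gt (R w)).
- exact: (mirror_comm_Gt_G (Rn w)).
- by have := qcomm_G_Gt (R w) k.+1 l.+1; rewrite !ind_posS !mul1r.
- by have := mirror_qcomm_Gt_G (Rn w) k.+1 l.+1; rewrite !ind_posS !mul1r.
Qed.
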